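(* Let $\rho$ be a combinatorial depth measure for hyperplanes in $\mathbb{R}^d$ satisfying conditions (i) and (ii) below. Then for every finite hyperplane arrangement $A$ and every $q\in\mathbb{R}^d$, $\rho(A,q)\le \mathrm{RD}(A,q)$. (i) For every arrangement $A$, every $q$ and every hyperplane $h$: $|\rho(A,q)-\rho(A\cup\{h\},q)|\le 1$. (ii) For every arrangement $A$: $\rho(A,q)=0$ whenever $q$ lies in an unbounded cell of $A$.
   Context: A hyperplane arrangement is a finite set of affine hyperplanes in $\mathbb{R}^d$. A depth measure for hyperplanes is a function $\rho$ assigning to each pair $(A,q)$ of a finite arrangement $A$ and a point $q\in\mathbb{R}^d$ a value in $\mathbb{R}_{\ge 0}$; it is combinatorial if, for each $A$, it is constant on each face of $A$ (the relatively open cells of all dimensions of the decomposition of $\mathbb{R}^d$ induced by $A$). Regression depth $\mathrm{RD}(A,q)$: the minimum, over all closed rays emanating from $q$, of the number of hyperplanes of $A$ intersected by or parallel to the ray. *)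

From HB Require Import structures.
From mathcomp Require Import all_boot all_order all_algebra.
From mathcomp Require Import finmap.
From mathcomp Require Import all_classical all_reals all_analysis.
Set Implicit Arguments. Unset Strict Implicit. Unset Printing Implicit Defensive.
Import Order.TTheory GRing.Theory Num.Theory.
Local Open Scope classical_set_scope.
Local Open Scope ring_scope.


Section HyperplaneDepth.
Variables (R : realType) (d : nat).

Definition pt := 'rV[R]_d.

Definition hyperplane_of (a : pt) (b : R) : set pt :=
  [set x | (x *m a^T) 0 0 = b].

Definition is_hyperplane (H : set pt) : Prop :=
  exists a b, a != 0 /\ H = hyperplane_of a b.

Definition arrangement := {fset (set pt)}.

Definition is_arrangement (A : arrangement) : Prop :=
  forall h, h \in A -> is_hyperplane h.

Definition segment (x y : pt) : set pt :=
  [set z | exists t : R, 0 <= t <= 1 /\ z = (1 - t) *: x + t *: y].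

(* x and y lie in the same face (relatively open cell) of A:
   for every h in A, both lie on h, or neither lies on h and they are
   on the same (open) side of h, i.e. the segment [x,y] avoids h. *)
Definition same_face (A : arrangement) (x y : pt) : Prop :=
  forall h, h \in A ->
    (h x /\ h y) \/ (~ h x /\ ~ h y /\ segment x y `&` h = set0).

Definition face_of (A : arrangement) (q : pt) : set pt :=
  [set x | same_face A q x].

(* q lies in an unbounded cell of A: q lies on no hyperplane of A (so its
   face is a full-dimensional cell) and that cell is unbounded *)
Definition in_unbounded_cell (A : arrangement) (q : pt) : Prop :=
  (forall h, h \in A -> ~ h q) /\ ~ bounded_set (face_of A q).

Definition ray (q v : pt) : set pt :=
  [set z | exists t : R, 0 <= t /\ z = q + t *: v].

Definition parallel_to (h : set pt) (v : pt) : Prop :=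
  forall x, h x -> h (x + v).

Definition ray_count (A : arrangement) (q v : pt) : nat :=
  (#|` [fset h in A | `[< ray q v `&` h !=set0 \/ parallel_to h v >] ]|)%fset.

Definition RD (A : arrangement) (q : pt) : R :=
  inf [set r : R | exists v : pt, v != 0 /\ r = (ray_count A q v)%:R].

Definition depth_measure (rho : arrangement -> pt -> R) : Prop :=
  forall A q, is_arrangement A -> 0 <= rho A q.

Definition combinatorial (rho : arrangement -> pt -> R) : Prop :=
  forall A x y, is_arrangement A -> same_face A x y -> rho A x = rho A y.

End HyperplaneDepth.

From HB Require Import structures.
From mathcomp Require Import all_boot all_order all_algebra.
From mathcomp Require Import finmap.
From mathcomp Require Import all_classical all_reals all_analysis.
From mathcomp Require Import lra.
Set Implicit Arguments. Unset Strict Implicit. Unset Printing Implicit Defensive.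
Import Order.TTheory GRing.Theory Num.Theory.
Local Open Scope classical_set_scope.
Local Open Scope ring_scope.

(* Take any ray from q and split A into the hyperplanes S that the ray meets
   or is parallel to, and the rest B.  The ray misses every hyperplane of B,
   so it stays inside the cell of q in B, which is therefore unbounded and
   rho B q = 0.  Adding the hyperplanes of S one at a time raises rho by at
   most one each, so rho A q is at most #|S|, the count of the ray; taking
   the infimum over rays gives rho A q <= RD A q. *)

Section RayCell.
Variables (R : realType) (d : nat).
Implicit Types (A : arrangement R d) (q v : pt R d).

Lemma ray_unbounded q v : v != 0 -> ~ bounded_set (ray q v).
Proof.
move=> v0 [M0 [_ /(_ (M0 + 1)) HM]]; have /HM bnd : M0 < M0 + 1 by rewrite ltrDl.
set M := M0 + 1 in bnd.
have nv_gt0 : 0 < `|v| by rewrite normr_gt0.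
pose t := (`|M| + `|q| + 1) / `|v|.
have t_ge0 : 0 <= t by rewrite divr_ge0 // !addr_ge0.
have /bnd le_M : ray q v (q + t *: v) by exists t.
have norm_tv : `|t *: v| = `|M| + `|q| + 1.
  by rewrite normrZ ger0_norm // divfK // gt_eqF.
have : `|t *: v| <= `|q + t *: v| + `|q|.
  by rewrite -[in X in `|X|](addKr q (t *: v)) addrC ler_normB.
rewrite norm_tv; have := ler_norm M; move: le_M => /=; lra.
Qed.

Lemma ray_sub_face A q v :
  (forall h, h \in A -> ray q v `&` h = set0) -> ray q v `<=` face_of A q.
Proof.
move=> miss z rz h hA; right.
have ray_off : forall w, ray q v w -> ~ h w.
  by move=> w rw hw; rewrite -[False]/(set0 w) -(miss h hA).
have rq : ray q v q by exists 0; rewrite scale0r addr0.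
split; [exact: ray_off|split; first exact: ray_off].
apply/seteqP; split => // w [[s [/andP[s0 s1] ->]] hw].
case: rz => t [t0 ->] in hw; apply: ray_off hw.
exists (s * t); split; first by rewrite mulr_ge0.
by rewrite scalerDr scalerA scalerBl scale1r addrA subrK.
Qed.

Lemma ray_in_unbounded_cell A q v : v != 0 ->
  (forall h, h \in A -> ray q v `&` h = set0) -> in_unbounded_cell A q.
Proof.
move=> v0 miss; split.
  move=> h hA hq; rewrite -[False]/(set0 q) -(miss h hA).
  by split=> //; exists 0; rewrite scale0r addr0.
move=> face_bnd; apply: (ray_unbounded v0 (sub_boundedr _ face_bnd)).
by move=> P faceP x /(ray_sub_face miss)/faceP.
Qed.

End RayCell.

Section AddHyperplanes.
Variables (R : realType) (d : nat) (rho : arrangement R d -> pt R d -> R).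
Hypothesis rho_add1 : forall A q h, is_arrangement A -> is_hyperplane h ->
  `|rho A q - rho (h |` A)%fset q| <= 1.

Lemma rho_fsetU_le (B S : arrangement R d) q : is_arrangement B ->
  (forall h, h \in S -> is_hyperplane h) ->
  rho (S `|` B)%fset q <= rho B q + (#|` S|%fset)%:R.
Proof.
move=> hB; elim/finSet_rect: S => S IH hS.
have [->|/fset0Pn[h hS_h]] := eqVneq S fset0%fset.
  by rewrite fset0U cardfs0 addr0.
have hS' : forall g, g \in (S `\ h)%fset -> is_hyperplane g.
  by move=> g; rewrite in_fsetD1 => /andP[_ /hS].
have arr' : is_arrangement ((S `\ h) `|` B)%fset.
  by move=> g; rewrite in_fsetU => /orP[/hS'|/hB].
have step := rho_add1 q arr' (hS h hS_h).
rewrite fsetUA fsetD1K // in step.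
have := IH _ (fproperD1 hS_h) hS'.
rewrite (cardfsD1 h S) hS_h add1n -natr1.
move: step; rewrite distrC => /(le_trans (ler_norm _)); lra.
Qed.

End AddHyperplanes.

Lemma rV_neq0_exists (R : nzRingType) (d : nat) : (0 < d)%N ->
  exists v : 'rV[R]_d, v != 0.
Proof.
move=> d_gt0; exists (const_mx 1); apply/eqP => /matrixP/(_ 0 (Ordinal d_gt0)).
by rewrite !mxE => /eqP; rewrite oner_eq0.
Qed.

Theorem lemma3p2 (R : realType) (d : nat) (hd : (0 < d)%N)
  (rho : arrangement R d -> pt R d -> R) :
  depth_measure rho ->
  combinatorial rho ->
  (forall (A : arrangement R d) (q : pt R d) (h : set (pt R d)),
      is_arrangement A -> is_hyperplane h ->
      `| rho A q - rho (h |` A)%fset q | <= 1) ->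
  (forall (A : arrangement R d) (q : pt R d),
      is_arrangement A -> in_unbounded_cell A q -> rho A q = 0) ->
  forall (A : arrangement R d) (q : pt R d),
    is_arrangement A -> rho A q <= RD A q.
Proof.
move=> _ _ rho_add1 rho_unbounded A q hA; apply: lb_le_inf.
  by have [v v0] := rV_neq0_exists R hd; exists (ray_count A q v)%:R, v.
move=> _ [v [v0 ->]].
set hit := fun h => `[< ray q v `&` h !=set0 \/ parallel_to h v >].
pose S := [fset h in A | hit h]%fset; pose B := [fset h in A | ~~ hit h]%fset.
have eA : A = (S `|` B)%fset.
  by apply/fsetP => h; rewrite in_fsetU !inE; case: (h \in A); case: (hit h).
have hB : is_arrangement B by move=> h; rewrite !inE => /andP[/hA].
have hS : forall h, h \in S -> is_hyperplane h.
  by move=> h; rewrite !inE => /andP[/hA].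
have rhoB0 : rho B q = 0.
  apply: rho_unbounded => //; apply: (ray_in_unbounded_cell v0) => h.
  rewrite !inE => /andP[_ /asboolPn miss].
  by apply/seteqP; split=> // z meet; apply: miss; left; exists z.
have := rho_fsetU_le rho_add1 q hB hS.
by rewrite -eA rhoB0 add0r.
Qed.
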